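(* Let $G$ be a connected simple graph with $n \geq 2$ vertices $v_1, \ldots, v_n$, and let $x = (x_1, \ldots, x_n)$ be an eigenvector of $L(G)$ corresponding to the eigenvalue $\lambda_2(G)$. Suppose that $x_1 = \max_i x_i$ and $x_2 = \min_i x_i$, and that the graph distance between $v_1$ and $v_2$ in $G$ is at most $2$. Then $\lambda(G) \geq 1$. In particular, every connected simple graph $G$ with $n\ge 2$ vertices and diameter less than $3$ satisfies $\lambda(G) \geq 1$.
   Context: For a simple graph $G$ on $n$ vertices, $L(G) = D(G) - A(G)$ is its Laplacian matrix ($A(G)$ the adjacency matrix, $D(G)$ the diagonal degree matrix), with eigenvalues $0 = \lambda_1(G) \leq \lambda_2(G) \leq \cdots \leq \lambda_n(G)$, and $\lambda(G) := \lambda_2(G)$ (the algebraic connectivity). Coordinate $x_i$ of a vector $x \in \mathbb{R}^n$ corresponds to vertex $v_i$. *)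

From mathcomp Require Import all_boot all_order all_algebra.
From mathcomp Require Import reals.
Set Implicit Arguments. Unset Strict Implicit. Unset Printing Implicit Defensive.
Import Order.TTheory GRing.Theory Num.Theory.
Local Open Scope ring_scope.

Definition simple_graph (n : nat) (e : rel 'I_n) : Prop :=
  symmetric e /\ irreflexive e.

Definition connected_graph (n : nat) (e : rel 'I_n) : Prop :=
  forall u v : 'I_n, connect e u v.

Definition dist_le (n : nat) (e : rel 'I_n) (k : nat) (u v : 'I_n) : Prop :=
  exists p : seq 'I_n, (size p <= k)%N /\ path e u p /\ last u p = v.

Definition diam_lt3 (n : nat) (e : rel 'I_n) : Prop :=
  forall u v : 'I_n, dist_le e 2 u v.

Definition degree (n : nat) (e : rel 'I_n) (i : 'I_n) : nat := #|[set j | e i j]|.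

Definition laplacian (R : nzRingType) (n : nat) (e : rel 'I_n) : 'M[R]_n :=
  \matrix_(i, j) ((if i == j then (degree e i)%:R else 0) - (if e i j then 1 else 0)).

(* lam is lambda_2 of the square matrix M: listing the eigenvalues
   (roots of the characteristic polynomial, with multiplicity) in
   nondecreasing order lambda_1 <= ... <= lambda_n, lam = lambda_2. *)
Definition is_lambda2 (R : realType) (n : nat) (M : 'M[R]_n) (lam : R) : Prop :=
  exists s : seq R, sorted <=%R s /\
    char_poly M = \prod_(a <- s) ('X - a%:P) /\ lam = nth 0 s 1.

From mathcomp Require Import all_boot all_order all_algebra.
From mathcomp Require Import reals ring lra.
Set Implicit Arguments. Unset Strict Implicit. Unset Printing Implicit Defensive.
Import Order.TTheory GRing.Theory Num.Theory.
Local Open Scope ring_scope.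

(* At a vertex i where an eigenvector x for lambda is maximal,
   lambda x_i = sum_(j ~ i) (x_i - x_j) >= x_i - x_w for w = i and for every
   neighbour w of i; at a minimal vertex the reverse inequality holds.  Choosing
   w equal or adjacent to both v1 and v2 and subtracting gives
   lambda (x_1 - x_2) >= x_1 - x_2, and x_1 > x_2 because lambda_2 > 0 for a
   connected graph.  The latter holds since 0 is a simple root of char_poly L:
   conjugating by a shear matrix gives char_poly L = X m and
   char_poly (L + J) = (X - n) m, with J the all-ones matrix, and L + J is
   nonsingular when G is connected. *)

Lemma char_poly_conj (R : comNzRingType) n (A P Q : 'M[R]_n) :
  Q *m P = 1%:M -> char_poly (Q *m A *m P) = char_poly A.
Proof.
move=> QP; pose C (M : 'M[R]_n) := map_mx polyC M.
have CQP : C Q *m C P = 1%:M by rewrite -map_mxM QP map_mx1.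
have conjE : char_poly_mx (Q *m A *m P) = C Q *m char_poly_mx A *m C P.
  by rewrite /char_poly_mx mulmxBr mulmxBl -!map_mxM mul_mx_scalar -scalemxAl
             CQP scalemx1.
by rewrite /char_poly conjE !det_mulmx mulrAC -det_mulmx CQP det1 mul1r.
Qed.

Lemma char_poly_col0 (R : comNzRingType) n (B : 'M[R]_n.+1) c :
  (forall i, B i 0 = c *+ (i == 0)) ->
  char_poly B = ('X - c%:P) * char_poly (row' 0 (col' 0 B)).
Proof.
move=> Bcol0; rewrite /char_poly (expand_det_col _ 0) (bigD1 0) //= big1 ?addr0.
  by rewrite /cofactor row'_col'_char_poly_mx !mxE Bcol0 eqxx expr0 mul1r.
by move=> i /negbTE i0; rewrite !mxE Bcol0 i0 mulr0n subr0 mul0r.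
Qed.

Section Shear.
Variables (R : comNzRingType) (n : nat).

Let E : 'M[R]_n.+1 := \matrix_(i, j) ((i != 0) && (j == 0))%:R.

Let mulEmx (A : 'M[R]_n.+1) : E *m A = \matrix_(i, j) ((i != 0)%:R * A 0 j).
Proof.
apply/matrixP => i j; rewrite !mxE (bigD1 0) //= big1 ?addr0.
  by rewrite mxE eqxx andbT.
by move=> k /negbTE k0; rewrite mxE k0 andbF mul0r.
Qed.

Let mulmxE (A : 'M[R]_n.+1) :
  A *m E = \matrix_(i, j) ((j == 0)%:R * \sum_(k | k != 0) A i k).
Proof.
apply/matrixP => i j; rewrite !mxE mulr_sumr [RHS]big_mkcond; apply: eq_bigr => k _.
by rewrite mxE; case: (k != 0); case: (j == 0); rewrite ?mulr1 ?mulr0 ?mul1r ?mul0r.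
Qed.

Let shearK : (1%:M - E) *m (1%:M + E) = 1%:M.
Proof.
have EE : E *m E = 0.
  by apply/matrixP => i j; rewrite mulEmx !mxE eqxx andFb mulr0.
by rewrite mulmxDr mulmx1 mulmxBl mul1mx EE subr0 addrNK.
Qed.

Let conj_shearE (A : 'M[R]_n.+1) i j :
  ((1%:M - E) *m A *m (1%:M + E)) i j =
  (if j == 0 then \sum_k A i k else A i j)
    - (i != 0)%:R * (if j == 0 then \sum_k A 0 k else A 0 j).
Proof.
rewrite mulmxDr mulmx1 mulmxBl mul1mx mulEmx mulmxE !mxE.
under eq_bigr do rewrite !mxE.
case: (j =P 0) => [->|_]; last by rewrite mul0r addr0.
rewrite [\sum_k A i k](bigD1 0) // [\sum_k A 0 k](bigD1 0) //= sumrB -mulr_sumr.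
ring.
Qed.

Lemma char_poly_zero_rowsum (A : 'M[R]_n.+1) :
  (forall i, \sum_j A i j = 0) ->
  exists m : {poly R}, char_poly A = 'X * m /\
    char_poly (A + const_mx 1) = ('X - n.+1%:R%:P) * m.
Proof.
move=> rowsum0; set J : 'M[R]_n.+1 := const_mx 1.
exists (char_poly (\matrix_(i, j) (A (lift 0 i) (lift 0 j) - A 0 (lift 0 j)))).
(* The rows of J are equal, so subtracting row 0 from the others cancels J. *)
have minorE (B : 'M[R]_n.+1) : B = A \/ B = A + J ->
    row' 0 (col' 0 ((1%:M - E) *m B *m (1%:M + E)))
    = \matrix_(i, j) (A (lift 0 i) (lift 0 j) - A 0 (lift 0 j)).
  have lift0 (k : 'I_n) : (lift 0 k == 0) = false.
    by rewrite eq_sym (negbTE (neq_lift _ _)).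
  move=> BA; apply/matrixP => i j.
  rewrite [RHS]mxE 2![LHS]mxE conj_shearE !lift0 mul1r.
  by case: BA => ->; rewrite ?mxE // opprD addrACA subrr addr0.
have rowsumJ k : \sum_j (A + J) k j = n.+1%:R.
  under eq_bigr do rewrite !mxE.
  by rewrite big_split /= rowsum0 add0r sumr_const card_ord.
split.
  rewrite -(char_poly_conj A shearK) (char_poly_col0 (c := 0)) ?subr0.
    by congr (_ * char_poly _); apply: minorE; left.
  by move=> i; rewrite conj_shearE eqxx !rowsum0 mulr0 subr0 mul0rn.
rewrite -(char_poly_conj (A + J) shearK) (char_poly_col0 (c := n.+1%:R)).
  by congr (_ * char_poly _); apply: minorE; right.
move=> i; rewrite conj_shearE eqxx !rowsumJ.
by case: (i =P 0); rewrite ?mul1r ?mul0r ?subrr ?subr0.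
Qed.

End Shear.

Lemma char_poly_zero_rowsum_simple_root0 (F : idomainType) n (A : 'M[F]_n.+1)
    (q : {poly F}) :
  (forall i, \sum_j A i j = 0) -> \det (A + const_mx 1) != 0 ->
  char_poly A != 'X ^+ 2 * q.
Proof.
move=> /char_poly_zero_rowsum [m [-> cpJ]] detJ; apply/eqP.
rewrite expr2 -mulrA => /(mulfI (negbT (polyX_eq0 _))) mE.
move: detJ; apply/negP; rewrite negbK.
have := char_poly_det (A + const_mx 1).
rewrite -horner_coef0 cpJ mE !hornerM hornerX mul0r mulr0 => /esym/eqP.
by rewrite mulf_eq0 signr_eq0.
Qed.

Lemma is_lambda2_root (R : realType) n (M : 'M[R]_n.+2) lam :
  is_lambda2 M lam -> root (char_poly M) lam.
Proof.
case=> s [_ [cpE ->]]; rewrite cpE root_prod_XsubC mem_nth //.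
by have := size_char_poly M; rewrite cpE size_prod_XsubC => -[->].
Qed.

Lemma is_lambda2_gt0 (R : realType) n (M : 'M[R]_n.+2) lam :
  is_lambda2 M lam -> (forall a, root (char_poly M) a -> 0 <= a) ->
  (forall q, char_poly M != 'X ^+ 2 * q) -> 0 < lam.
Proof.
case=> s [sorted_s [cpE ->]] root_ge0 simple0.
have : size s = n.+2 by have := size_char_poly M; rewrite cpE size_prod_XsubC => -[].
case: s sorted_s cpE => [|a0 [|a1 s]] //= /andP [a01 _] cpE _.
have a0_ge0 : 0 <= a0 by apply: root_ge0; rewrite cpE root_prod_XsubC mem_head.
rewrite lt_def (le_trans a0_ge0 a01) andbT.
apply: contraNneq (simple0 (\prod_(a <- s) ('X - a%:P))) => a1_0.
have a0_0 : a0 = 0 by apply: le_anti; rewrite a0_ge0 -a1_0 a01.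
by rewrite cpE !big_cons a0_0 a1_0 subr0 mulrA -expr2.
Qed.

Lemma ex_argmax (T : finType) (R : realDomainType) (t : T) (f : T -> R) :
  exists i, forall j, f j <= f i.
Proof.
by case: (@arg_maxP _ R _ t xpredT f erefl) => i _ fi; exists i => j; apply: fi.
Qed.

Lemma ex_argmin (T : finType) (R : realDomainType) (t : T) (f : T -> R) :
  exists i, forall j, f i <= f j.
Proof.
by case: (@arg_minP _ R _ t xpredT f erefl) => i _ fi; exists i => j; apply: fi.
Qed.

Lemma dist_le2_common_neighbour n (e : rel 'I_n) u v :
  symmetric e -> dist_le e 2 u v ->
  exists w, ((w == u) || e u w) && ((w == v) || e v w).
Proof.
move=> e_sym [p [+ [+ <-]]]; case: p => [|w [|z [|]]] //= _.
- by exists u; rewrite eqxx.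
- by rewrite andbT => uw; exists w; rewrite uw eqxx !orbT.
- by case/andP=> uw /andP [wz _]; exists w; rewrite uw e_sym wz !orbT.
Qed.

Section Laplacian.
Variables (R : realFieldType) (n : nat) (e : rel 'I_n).
Hypothesis e_sym : symmetric e.
Notation L := (laplacian R e).

Lemma mul_laplacianE (x : 'cV[R]_n) i :
  (L *m x) i 0 = \sum_(j | e i j) (x i 0 - x j 0).
Proof.
rewrite mxE sumrB; under eq_bigr do rewrite mxE mulrBl.
rewrite sumrB (bigD1 i) //= eqxx big1 ?addr0; last first.
  by move=> j /negbTE ji; rewrite eq_sym ji mul0r.
rewrite sumr_const /degree cardsE mulr_natl; congr (_ - _).
rewrite [RHS]big_mkcond; apply: eq_bigr => j _.
by case: (e i j); rewrite ?mul1r ?mul0r.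
Qed.

Lemma laplacian_rowsum i : \sum_j L i j = 0.
Proof.
have := mul_laplacianE (const_mx 1) i.
rewrite big1 => [|j _]; last by rewrite !mxE subrr.
by rewrite mxE; under eq_bigr do rewrite [const_mx _ _ _]mxE mulr1.
Qed.

Lemma tr_laplacian : L^T = L.
Proof.
apply/matrixP => i j; rewrite !mxE e_sym.
by case: (i =P j) => [->|/eqP ij]; rewrite ?eqxx // eq_sym (negbTE ij).
Qed.

Lemma mul_laplacian_ge_at_max (x : 'cV[R]_n) i w :
  (forall j, x j 0 <= x i 0) -> (w == i) || e i w ->
  x i 0 - x w 0 <= (L *m x) i 0.
Proof.
move=> max_i near_w; rewrite mul_laplacianE.
have terms_ge0 j : 0 <= x i 0 - x j 0 by rewrite subr_ge0.
case/orP: near_w => [/eqP-> | iw]; first by rewrite subrr sumr_ge0.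
by rewrite (bigD1 w) //= lerDl sumr_ge0.
Qed.

Lemma mul_laplacian_le_at_min (x : 'cV[R]_n) i w :
  (forall j, x i 0 <= x j 0) -> (w == i) || e i w ->
  (L *m x) i 0 <= x i 0 - x w 0.
Proof.
move=> min_i near_w; have := @mul_laplacian_ge_at_max (- x) i w.
by rewrite mulmxN !mxE -opprD lerN2; apply=> // j; rewrite !mxE lerN2.
Qed.

Lemma mul_laplacian_ge0_at_max (x : 'cV[R]_n) i :
  (forall j, x j 0 <= x i 0) -> 0 <= (L *m x) i 0.
Proof. by move=> max_i; rewrite -(subrr (x i 0)) mul_laplacian_ge_at_max ?eqxx. Qed.

Lemma mul_laplacian_le0_at_min (x : 'cV[R]_n) i :
  (forall j, x i 0 <= x j 0) -> (L *m x) i 0 <= 0.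
Proof. by move=> min_i; rewrite -(subrr (x i 0)) mul_laplacian_le_at_min ?eqxx. Qed.

Lemma laplacian_eigenvalue_ge0 (x : 'cV[R]_n) a :
  x != 0 -> L *m x = a *: x -> 0 <= a.
Proof.
move=> x_neq0 Lx; have /cV0Pn [k _] := x_neq0.
rewrite leNgt; apply: contra x_neq0 => a_lt0.
have [imax max_x] := ex_argmax k (fun j => x j 0).
have [imin min_x] := ex_argmin k (fun j => x j 0).
have := mul_laplacian_ge0_at_max max_x; have := mul_laplacian_le0_at_min min_x.
rewrite Lx !mxE nmulr_rge0 // nmulr_rle0 // => xmin_ge0 xmax_le0.
apply/eqP/matrixP => i j; rewrite ord1 !mxE; apply: le_anti.
by rewrite (le_trans (max_x i)) ?(le_trans xmin_ge0).
Qed.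

Lemma laplacian_eigenvector a :
  root (char_poly L) a -> exists2 x : 'cV[R]_n, x != 0 & L *m x = a *: x.
Proof.
rewrite -eigenvalue_root_char => /eigenvalueP [v vL v_neq0].
exists v^T; first by rewrite trmx_eq0.
by rewrite -tr_laplacian -trmx_mul vL linearZ.
Qed.

Lemma laplacian_root_ge0 a : root (char_poly L) a -> 0 <= a.
Proof. by case/laplacian_eigenvector=> x; apply: laplacian_eigenvalue_ge0. Qed.

Lemma laplacian_eigenvalue_ge1 (x : 'cV[R]_n) lam v1 v2 :
  lam != 0 -> x != 0 -> L *m x = lam *: x ->
  (forall i, x i 0 <= x v1 0) -> (forall i, x v2 0 <= x i 0) ->
  dist_le e 2 v1 v2 -> 1 <= lam.
Proof.
move=> lam_neq0 x_neq0 Lx max_v1 min_v2.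
case/(dist_le2_common_neighbour e_sym)=> w /andP [near_v1 near_v2].
have x21 : x v2 0 < x v1 0.
  rewrite lt_neqAle min_v2 andbT; apply: contra lam_neq0 => /eqP x12.
  have x_const k : x k 0 = x v1 0 by apply: le_anti; rewrite max_v1 -x12 min_v2.
  have Lx0 : L *m x = 0.
    apply/matrixP => i j; rewrite ord1 mul_laplacianE mxE big1 // => k _.
    by rewrite !x_const subrr.
  by have := scaler_eq0 lam x; rewrite -Lx Lx0 eqxx (negbTE x_neq0) orbF => <-.
have := mul_laplacian_ge_at_max max_v1 near_v1.
have := mul_laplacian_le_at_min min_v2 near_v2.
rewrite Lx !mxE; nra.
Qed.

Section Connected.
Hypothesis e_conn : connected_graph e.

Lemma laplacian_kernel_const (x : 'cV[R]_n) :
  L *m x = 0 -> forall i j, x i 0 = x j 0.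
Proof.
move=> Lx0 i j; have [m max_m] := ex_argmax i (fun k => x k 0).
have max_neighbour k w : x k 0 = x m 0 -> e k w -> x w 0 = x m 0.
  move=> xk kw; have max_k l : x l 0 <= x k 0 by rewrite xk.
  have := @mul_laplacian_ge_at_max x k w max_k.
  rewrite kw orbT Lx0 mxE subr_le0 => /(_ isT) xkw.
  by apply: le_anti; rewrite max_m -xk xkw.
have max_closed : closed e [pred k | x k 0 == x m 0].
  move=> k l kl /=; apply/eqP/eqP => [/max_neighbour|/max_neighbour]; apply=> //.
  by rewrite e_sym.
have xm k : x k 0 = x m 0.
  by have := closed_connect max_closed (e_conn m k); rewrite !inE eqxx => /esym/eqP.
by rewrite !xm.
Qed.

Lemma det_laplacianD_const1_neq0 : \det (L + const_mx 1) != 0.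
Proof.
apply/negP; rewrite -det_tr => /det0P [v v_neq0 vM].
set x := v^T; have x_neq0 : x != 0 by rewrite trmx_eq0.
have Mx : (L + const_mx 1) *m x = 0 by rewrite -[L + _]trmxK -trmx_mul vM trmx0.
set S := \sum_k x k 0.
have Lx i : (L *m x) i 0 = - S.
  move/matrixP: Mx => /(_ i 0); rewrite mulmxDl !mxE => /eqP.
  rewrite addr_eq0 => /eqP ->.
  by congr (- _); apply: eq_bigr => j _; rewrite mxE mul1r.
have /cV0Pn [k _] := x_neq0.
have [imax max_x] := ex_argmax k (fun j => x j 0).
have [imin min_x] := ex_argmin k (fun j => x j 0).
have S0 : S = 0.
  have := mul_laplacian_ge0_at_max max_x; have := mul_laplacian_le0_at_min min_x.
  rewrite !Lx; lra.
have x_const : forall i j, x i 0 = x j 0.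
  apply: laplacian_kernel_const.
  by apply/matrixP => i j; rewrite ord1 Lx S0 oppr0 mxE.
move/negP: x_neq0; apply; apply/eqP/matrixP => i j; rewrite ord1 mxE.
have : S = x i 0 *+ n.
  rewrite /S (eq_bigr (fun=> x i 0)) => [|l _]; last exact: x_const.
  by rewrite sumr_const card_ord.
rewrite S0 => /esym/eqP.
by rewrite mulrn_eq0 eqn0Ngt (leq_ltn_trans (leq0n i) (ltn_ord i)) /= !mxE => /eqP.
Qed.

End Connected.
End Laplacian.

Theorem lemma4 (R : realType) (n : nat) (hn : (2 <= n)%N) (e : rel 'I_n)
  (hG : simple_graph e) (hconn : connected_graph e) (lam : R)
  (hlam : is_lambda2 (laplacian R e) lam) :
  (forall (x : 'cV[R]_n) (v1 v2 : 'I_n),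
      x != 0 -> laplacian R e *m x = lam *: x ->
      v1 != v2 ->
      (forall i, x i 0 <= x v1 0) -> (forall i, x v2 0 <= x i 0) ->
      dist_le e 2 v1 v2 ->
      1 <= lam)
  /\ (diam_lt3 e -> 1 <= lam).
Proof.
case: n hn e hG hconn lam hlam => [|[|n]] // _ e [e_sym _] e_conn lam lam2.
have lam_neq0 : lam != 0.
  apply/lt0r_neq0/(is_lambda2_gt0 lam2 (laplacian_root_ge0 e_sym)) => q.
  apply: char_poly_zero_rowsum_simple_root0 (laplacian_rowsum R e) _.
  exact: det_laplacianD_const1_neq0 e_sym e_conn.
split=> [x v1 v2 x_neq0 Lx _|diam].
  exact: laplacian_eigenvalue_ge1 lam_neq0 x_neq0 Lx.
have [x x_neq0 Lx] := laplacian_eigenvector e_sym (is_lambda2_root lam2).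
have [v1 max_v1] := ex_argmax ord0 (fun i => x i 0).
have [v2 min_v2] := ex_argmin ord0 (fun i => x i 0).
exact: laplacian_eigenvalue_ge1 lam_neq0 x_neq0 Lx max_v1 min_v2 (diam v1 v2).
Qed.
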